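(* Let $n\ge 1$, $s\in D^n$, and let $f\in\mathrm{Min}(s)$ be monic of degree $d$. Let $t\in D^{\mathbb{N}}$ be the extension of $s$ by $f$, i.e. $t_i=s_i$ for $1\le i\le n$ and $t_j=-(f_0t_{j-d}+\cdots+f_{d-1}t_{j-1})$ for all $j\ge n+1$. If the ideal $\mathrm{Ann}(t)\subseteq D[x]$ is principal, then $\mathrm{Ann}(t)=(f)$.
   Context: Let $D$ be a commutative integral domain with $1\neq 0$. For a finite sequence $s=(s_1,\dots,s_n)\in D^n$, a polynomial $f\in D[x]$ is an annihilator of $s$, written $f\in\mathrm{Ann}(s)$, if $f=0$, or $d=\deg f\ge 0$ and $\sum_{k=0}^{d}f_ks_{j-d+k}=0$ for all $j$ with $d+1\le j\le n$. $\mathrm{Min}(s)$ denotes the set of nonzero annihilators of $s$ of least possible degree. For an infinite sequence $t=(t_1,t_2,\dots)\in D^{\mathbb{N}}$, $\mathrm{Ann}(t)$ is the set of $f\in D[x]$ such that $f=0$, or $d=\deg f\ge0$ and $\sum_{k=0}^{d}f_kt_{j-d+k}=0$ for all $j\ge d+1$; it is an ideal of $D[x]$. *)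

From HB Require Import structures.
From mathcomp Require Import all_boot all_order all_algebra.
Set Implicit Arguments. Unset Strict Implicit. Unset Printing Implicit Defensive.
Import Order.TTheory GRing.Theory Num.Theory.
Local Open Scope ring_scope.

(* Conventions: sequences are 1-indexed as in the paper.
   A finite sequence s = (s_1,...,s_n) is a seq D of size n, s_j = nth 0 s (j-1).
   An infinite sequence t = (t_1, t_2, ...) is a function t : nat -> D with
   t_j = t j for j >= 1 (the value t 0 is irrelevant).
   For a polynomial f, deg f = (size f).-1, so "d+1 <= j" reads "size f <= j". *)

Definition seqat (D : idomainType) (s : seq D) (j : nat) : D := nth 0 s j.-1.

Definition ann_fin (D : idomainType) (s : seq D) (f : {poly D}) : Prop :=
  f = 0 \/
  forall j : nat, (size f <= j)%N -> (j <= size s)%N ->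
    \sum_(k < size f) f`_k * seqat s (j - (size f).-1 + k)%N = 0.

Definition min_ann (D : idomainType) (s : seq D) (f : {poly D}) : Prop :=
  f != 0 /\ ann_fin s f /\
  forall g : {poly D}, g != 0 -> ann_fin s g -> (size f <= size g)%N.

Definition ann_inf (D : idomainType) (t : nat -> D) (f : {poly D}) : Prop :=
  f = 0 \/
  forall j : nat, (size f <= j)%N ->
    \sum_(k < size f) f`_k * t (j - (size f).-1 + k)%N = 0.

Definition ann_inf_generated_by (D : idomainType) (t : nat -> D) (g : {poly D}) : Prop :=
  forall h : {poly D}, ann_inf t h <-> exists r : {poly D}, h = r * g.

From HB Require Import structures.
From mathcomp Require Import zify.
From mathcomp Require Import all_boot all_order all_algebra.
Set Implicit Arguments. Unset Strict Implicit. Unset Printing Implicit Defensive.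
Import Order.TTheory GRing.Theory Num.Theory.
Local Open Scope ring_scope.

(* Since f is monic and t obeys the recurrence of f beyond s, f annihilates t,
   so the generator g of Ann(t) divides f, say f = r g.  Every element of Ann(t)
   annihilates the prefix s of t, so g is a nonzero annihilator of s and the
   minimality of f gives deg f <= deg g.  Hence r is a constant, a unit because
   f is monic, and g and f generate the same ideal. *)

Section Annihilators.

Variable D : idomainType.

Lemma ann_fin_of_ann_inf (s : seq D) (t : nat -> D) (g : {poly D}) :
  (forall i, (0 < i <= size s)%N -> t i = seqat s i) ->
  ann_inf t g -> ann_fin s g.
Proof.
move=> ts [->|gt]; [by left | right] => j gj js.
rewrite -[RHS](gt j gj); apply: eq_bigr => k _; rewrite ts //.
by have := ltn_ord k; lia.
Qed.

Lemma ann_inf_of_recurrence (s : seq D) (t : nat -> D) (f : {poly D}) :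
  f \is monic -> ann_fin s f ->
  (forall i, (0 < i <= size s)%N -> t i = seqat s i) ->
  (forall j, (size s < j)%N ->
     t j = - \sum_(k < (size f).-1) f`_k * t (j - (size f).-1 + k)%N) ->
  ann_inf t f.
Proof.
move=> fmon [f0|fs] ts trec; first by move: (monic_neq0 fmon); rewrite f0 eqxx.
have szf : size f = (size f).-1.+1 by rewrite prednK // size_poly_gt0 monic_neq0.
right => j fj; have [js|sj] := leqP j (size s).
  rewrite -[RHS](fs j fj js); apply: eq_bigr => k _; rewrite ts //.
  by have := ltn_ord k; lia.
rewrite szf big_ord_recr /= -/(lead_coef f) (monicP fmon) mul1r.
rewrite subnK; last by move: fj; rewrite szf; lia.
by rewrite (trec j sj) addrN.
Qed.

Lemma ann_inf_generator (t : nat -> D) (g : {poly D}) :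
  ann_inf_generated_by t g -> ann_inf t g.
Proof. by move=> tg; apply/tg; exists 1; rewrite mul1r. Qed.

Lemma ann_inf_generated_by_unit_scale (t : nat -> D) (g : {poly D}) (c : D) :
  c \is a GRing.unit -> ann_inf_generated_by t g ->
  ann_inf_generated_by t (c%:P * g).
Proof.
move=> cu tg h; rewrite tg; split=> -[r ->].
  by exists (r * c^-1%:P); rewrite mulrA -(mulrA r) -polyCM mulVr // mulr1.
by exists (r * c%:P); rewrite mulrA.
Qed.

Lemma monic_mul_size_leq (f r g : {poly D}) :
  f \is monic -> f = r * g -> (size f <= size g)%N ->
  exists2 c, c \is a GRing.unit & r = c%:P.
Proof.
move=> fmon fE fg; have := monic_neq0 fmon; rewrite fE mulf_eq0 negb_or.
case/andP=> rn0 gn0; move: fg; rewrite fE size_mul //.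
have := size_poly_gt0 r; rewrite rn0 => r_gt0 size_r.
have rC : r = (r`_0)%:P by apply: size1_polyC; lia.
exists r`_0 => //; apply/unitrPr; exists (lead_coef g).
by rewrite -(monicP fmon) fE lead_coefM {2}rC lead_coefC.
Qed.

End Annihilators.

Theorem mainTheorem1 (D : idomainType) (n : nat) (s : n.-tuple D)
    (f : {poly D}) (t : nat -> D) :
  (1 <= n)%N ->
  min_ann s f ->
  f \is monic ->
  (forall i : nat, (1 <= i)%N -> (i <= n)%N -> t i = seqat s i) ->
  (forall j : nat, (n.+1 <= j)%N ->
     t j = - \sum_(k < (size f).-1) f`_k * t (j - (size f).-1 + k)%N) ->
  (exists g : {poly D}, ann_inf_generated_by t g) ->
  ann_inf_generated_by t f.
Proof.
move=> _ [_ [fs fmin]] fmon st trec [g tg].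
have ts i : (0 < i <= size s)%N -> t i = seqat s i.
  by rewrite size_tuple => /andP[]; apply: st.
have fAt : ann_inf t f.
  by apply: ann_inf_of_recurrence fmon fs ts _ => j; rewrite size_tuple; apply: trec.
have [r fE] := (tg f).1 fAt.
have gn0 : g != 0.
  by apply: (contra_neq _ (monic_neq0 fmon)) => g0; rewrite fE g0 mulr0.
have gs := ann_fin_of_ann_inf ts (ann_inf_generator tg).
have [c cu rE] := monic_mul_size_leq fmon fE (fmin g gn0 gs).
by rewrite fE rE; exact: ann_inf_generated_by_unit_scale cu tg.
Qed.
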